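(* Let $G$ be a torsion-free group, $n\in\mathbb N$, and $m>(n-1)^2$ an integer. Then for every cubic function $f:2^m\to G$ we have $|f(2^m)|>n$.
   Context: $2^m=\{0,1\}^m$. For $\mathbf g=(g_1,\dots,g_m)\in(G\setminus\{e\})^m$ and $\mathbf x=(x_1,\dots,x_m)\in 2^m$ put $\mathbf g^{\mathbf x}=g_1^{x_1}\cdots g_m^{x_m}$. A function $f:2^m\to G$ is cubic if there is $\mathbf g\in(G\setminus\{e\})^m$ with $f(\mathbf x)=\mathbf g^{\mathbf x}$ for all $\mathbf x\in 2^m$. A group is torsion-free if every non-neutral element has infinite order. *)

From HB Require Import structures.
From mathcomp Require Import all_boot all_order all_algebra.
Set Implicit Arguments. Unset Strict Implicit. Unset Printing Implicit Defensive.

Local Open Scope group_scope.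

Definition torsion_free (G : groupType) : Prop :=
  forall (x : G), x != 1 -> forall k : nat, (0 < k)%N -> x ^+ k != 1.

(* 2^m = {0,1}^m is represented by {ffun 'I_m -> bool} (bool coerces to nat,
   false = 0, true = 1).  g^x = g_1^{x_1} ... g_m^{x_m} (ordered product). *)
Definition cubepow (G : groupType) (m : nat) (g : 'I_m -> G)
    (x : {ffun 'I_m -> bool}) : G :=
  \prod_(i < m) (g i) ^+ (x i).

Definition cubic (G : groupType) (m : nat) (f : {ffun 'I_m -> bool} -> G) : Prop :=
  exists g : 'I_m -> G, (forall i, g i != 1) /\
    (forall x : {ffun 'I_m -> bool}, f x = cubepow g x).

Definition image_card (G : groupType) (m : nat) (f : {ffun 'I_m -> bool} -> G) : nat :=
  size (undup (codom f)).

(* If g != 1 in a torsion-free group, right multiplication by g moves some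
   element of every finite nonempty set S out of S (otherwise S would contain
   the infinitely many distinct elements a g^j).  Hence adjoining one generator
   g_{m+1} to a cube, i.e. passing from S = f(2^m) to S u S g_{m+1}, strictly
   enlarges the image, so |f(2^m)| >= m + 1 by induction on m.  Finally
   (n-1)^2 < m forces n <= m. *)
From HB Require Import structures.
From mathcomp Require Import all_boot all_order all_algebra zify.
Set Implicit Arguments. Unset Strict Implicit.
Local Open Scope group_scope.

Lemma leq_size_undup (T : eqType) (s t : seq T) :
  {subset s <= t} -> size (undup s) <= size (undup t).
Proof.
move=> sub_st; apply: uniq_leq_size (undup_uniq s) _ => x.
by rewrite !mem_undup => /sub_st.
Qed.

Section TorsionFree.

Variables (G : groupType) (hG : torsion_free G).

Lemma torsion_free_expg_inj (g : G) : g != 1 -> injective (fun j : nat => g ^+ j).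
Proof.
move=> g_neq1 i j.
wlog le_ij : i j / i <= j => [wlog_ij | ].
  move=> e; case/orP: (leq_total i j) => le; first exact: wlog_ij.
  exact/esym/(wlog_ij _ _ le)/esym.
rewrite -(subnKC le_ij) expgnDr -{1}[g ^+ i]mulg1 => /mulgI /esym g_exp1.
apply/eqP; rewrite -{1}[i]addn0 eqn_add2l eq_sym eqn0Ngt.
by apply/negP => /(hG g_neq1); rewrite g_exp1 eqxx.
Qed.

Lemma exists_mulg_notin (s : seq G) (g : G) :
  g != 1 -> s != [::] -> exists2 a, a \in s & a * g \notin s.
Proof.
move=> g_neq1; case: s => [//|a0 s] _; set t := a0 :: s.
have [/allP t_stable | /allPn [a a_t a_g]] := boolP (all (fun a => a * g \in t) t);
  last by exists a.
have orbit_t j : a0 * g ^+ j \in t.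
  elim: j => [|j IHj]; first by rewrite mulg1 mem_head.
  by rewrite expgSr mulgA; apply: t_stable.
suff: size t < size t by rewrite ltnn.
rewrite -{1}(size_mkseq (fun j => a0 * g ^+ j) (size t).+1).
apply: uniq_leq_size => [|_ /mapP [j _ ->] //].
rewrite mkseq_uniq // => i j /mulgI.
exact: torsion_free_expg_inj.
Qed.

Lemma size_undup_cat_mulg (s : seq G) (g : G) :
  g != 1 -> s != [::] ->
  size (undup s) < size (undup (s ++ [seq a * g | a <- s])).
Proof.
move=> g_neq1 s_neq0; have [a a_s a_g] := exists_mulg_notin g_neq1 s_neq0.
have sub : {subset a * g :: s <= s ++ [seq a * g | a <- s]}.
  move=> x; rewrite inE mem_cat => /orP [/eqP -> | -> //].
  by apply/orP; right; apply: map_f.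
by apply: leq_trans (leq_size_undup sub); rewrite /= (negPf a_g).
Qed.

End TorsionFree.

Definition ffun_rcons m (x : {ffun 'I_m -> bool}) (b : bool) : {ffun 'I_m.+1 -> bool} :=
  [ffun i => if unlift ord_max i is Some j then x j else b].

Lemma cubepow_rcons (G : groupType) m (g : 'I_m.+1 -> G) x (b : bool) :
  cubepow g (ffun_rcons x b) = cubepow (g \o widen_ord (leqnSn m)) x * g ord_max ^+ b.
Proof.
rewrite /cubepow big_ord_recr /= ffunE unlift_none; congr (_ * _).
apply: eq_bigr => i _; rewrite ffunE.
have -> : widen_ord (leqnSn m) i = lift ord_max i.
  by apply: val_inj; rewrite /= /bump leqNgt ltn_ord.
by rewrite liftK.
Qed.

Lemma codom_cubepowS (G : groupType) m (g : 'I_m.+1 -> G) :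
  let s := codom (cubepow (g \o widen_ord (leqnSn m))) in
  {subset s ++ [seq a * g ord_max | a <- s] <= codom (cubepow g)}.
Proof.
move=> s y; rewrite mem_cat => /orP [/codomP [x ->] | /mapP [_ /codomP [x ->] ->]].
  by rewrite -[X in X \in _]mulg1 -(expg0 (g ord_max)) -(cubepow_rcons _ _ false) codom_f.
by rewrite -[g ord_max in X in X \in _]expg1 -(cubepow_rcons _ _ true) codom_f.
Qed.

Lemma image_card_gt0 (G : groupType) m (f : {ffun 'I_m -> bool} -> G) :
  0 < image_card f.
Proof.
rewrite /image_card lt0n size_eq0; apply/eqP => undup_nil.
by have := mem_undup (codom f) (f [ffun=> false]); rewrite undup_nil codom_f.
Qed.

Lemma image_card_cubepow (G : groupType) (hG : torsion_free G) m (g : 'I_m -> G) :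
  (forall i, g i != 1) -> m < image_card (cubepow g).
Proof.
elim: m g => [|m IHm] g g_neq1; first exact: image_card_gt0.
set g' := g \o widen_ord (leqnSn m); set s := codom (cubepow g').
have s_neq0 : s != [::] by rewrite -size_eq0 -lt0n size_codom card_ffun card_bool expn_gt0.
rewrite /image_card; apply: leq_trans (leq_size_undup (codom_cubepowS (g := g))).
have lt_m_s : m < size (undup s) by exact: IHm g' (fun i => g_neq1 _).
exact: leq_ltn_trans lt_m_s (size_undup_cat_mulg hG (g_neq1 ord_max) s_neq0).
Qed.

Lemma leq_of_sqr_subz1_lt (n m : nat) : ((n%:Z - 1) ^+ 2 < m%:Z)%R -> n <= m.
Proof. by move=> ?; nia. Qed.

Theorem lemma4p1 (G : groupType) (hG : torsion_free G) (n m : nat)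
  (hm : (((n%:Z - 1) ^+ 2 < m%:Z)%R)) (f : {ffun 'I_m -> bool} -> G)
  (hf : cubic f) : (n < image_card f)%N.
Proof.
have [g [g_neq1 f_eq]] := hf.
have -> : image_card f = image_card (cubepow g) by rewrite /image_card (eq_codom f_eq).
exact: leq_ltn_trans (leq_of_sqr_subz1_lt hm) (image_card_cubepow hG g_neq1).
Qed.
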